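(* Let $\gamma$ denote the Euler–Mascheroni constant. Define $a_1=\frac12$, $a_2=\frac16$, $a_3=-\frac16$, $a_4=\frac35$, $a_5=-\frac35$, $a_6=\frac{79}{126}$, $a_7=-\frac{79}{126}$, $a_8=\frac{7230}{6241}$, $a_9=-\frac{7230}{6241}$, $a_{10}=\frac{4146631}{3833346}$, $a_{11}=-\frac{4146631}{3833346}$. For a positive integer $n$ and $k\in\{10,11\}$ define the finite continued fraction $$R_k(n)=\cfrac{a_1}{n+\cfrac{a_2 n}{n+\cfrac{a_3 n}{n+\cfrac{\ddots}{n+\cfrac{a_{k-1}n}{n+a_k}}}}},$$ i.e. $R_k(n)=a_1/T_2$ where $T_k=n+a_k$ and $T_j=n+\frac{a_j n}{T_{j+1}}$ for $2\le j\le k-1$, and let $r_k(n)=\sum_{m=1}^{n}\frac1m-\ln n-R_k(n)$. Put $C_{10}=-\frac{2755095121}{892586949408}$ and $C_{11}=\frac{20169451}{3821257440}$. Then for every positive integer $n$, $$-C_{10}\,\frac{1}{(n+1)^{11}}<\gamma-r_{10}(n)<-C_{10}\,\frac{1}{n^{11}},$$ $$C_{11}\,\frac{1}{(n+1)^{12}}<r_{11}(n)-\gamma<C_{11}\,\frac{1}{n^{12}}.$$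
   Context: $\gamma=\lim_{n\to\infty}\left(\sum_{m=1}^{n}\frac1m-\ln n\right)$ is the Euler–Mascheroni constant. The constants $C_{10},C_{11}$ are the limits $\lim_{n\to\infty}n^{k+1}(r_k(n)-\gamma)$ for $k=10,11$. *)

From Stdlib Require Import Reals.
From Coquelicot Require Import Coquelicot.
Open Scope R_scope.

Definition harmonic (n : nat) : R := sum_n_m (fun m => / INR m) 1 n.

Definition euler_gamma : R := real (Lim_seq (fun n => harmonic n - ln (INR n))).

(* coefficients a_1..a_11 (a_j for other j is irrelevant, set to 0) *)
Definition acoef (j : nat) : R :=
  match j with
  | 1 => 1/2
  | 2 => 1/6
  | 3 => -(1/6)
  | 4 => 3/5
  | 5 => -(3/5)
  | 6 => 79/126
  | 7 => -(79/126)
  | 8 => 7230/6241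
  | 9 => -(7230/6241)
  | 10 => 4146631/3833346
  | 11 => -(4146631/3833346)
  | _ => 0
  end.

(* Tfrom x j m = T_j when k = j + m:
   T_k = x + a_k,  T_j = x + a_j x / T_{j+1}. *)
Fixpoint Tfrom (x : R) (j m : nat) : R :=
  match m with
  | O => x + acoef j
  | S m' => x + acoef j * x / Tfrom x (S j) m'
  end.

Definition Rk (k n : nat) : R := acoef 1 / Tfrom (INR n) 2 (k - 2).

Definition rk (k n : nat) : R := harmonic n - ln (INR n) - Rk k n.

Definition C10 : R := -(2755095121 / 892586949408).
Definition C11 : R := 20169451 / 3821257440.

From Stdlib Require Import Reals Lra Lia ZArith List Bool.
From Coquelicot Require Import Coquelicot.
Import ListNotations.
Open Scope R_scope.

(* Write R_k(n) as a rational function P(n)/Q(n). For a correction c(n) = K/(n + s)^p, the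
   increment of r_k(n) - c(n) from n to n + 1 extends to a function F of a real variable
   x >= 1 that tends to 0 at infinity. Its derivative is a rational function whose numerator,
   after the substitution x -> x + 1, has coefficients of one sign; hence F has constant
   sign. With s = 0 and s = 1 this yields an increasing and a decreasing sequence, both
   converging to gamma, which therefore lies strictly between them. Polynomials are integer
   coefficient lists, so every identity and sign condition is checked by computation. *)

Fixpoint peval (l : list Z) (x : R) : R :=
  match l with nil => 0 | c :: l' => IZR c + x * peval l' x end.

Fixpoint padd (l1 l2 : list Z) : list Z :=
  match l1, l2 with
  | nil, _ => l2
  | _, nil => l1
  | a :: l1', b :: l2' => (a + b)%Z :: padd l1' l2'
  end.

Definition pscal (c : Z) (l : list Z) : list Z := map (Z.mul c) l.

Definition psub (l1 l2 : list Z) : list Z := padd l1 (pscal (-1) l2).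

Fixpoint pmul (l1 l2 : list Z) : list Z :=
  match l1 with
  | nil => nil
  | a :: l1' => padd (pscal a l2) (0%Z :: pmul l1' l2)
  end.

Fixpoint ppow (l : list Z) (n : nat) : list Z :=
  match n with O => [1%Z] | S n' => pmul l (ppow l n') end.

Fixpoint pcomp (l q : list Z) : list Z :=
  match l with nil => nil | c :: l' => padd [c] (pmul q (pcomp l' q)) end.

Definition pshift (l : list Z) : list Z := pcomp l [1%Z; 1%Z].

Fixpoint pder (l : list Z) : list Z :=
  match l with nil => nil | _ :: l' => padd l' (0%Z :: pder l') end.

Lemma peval_padd l1 l2 x : peval (padd l1 l2) x = peval l1 x + peval l2 x.
Proof.
  revert l2; induction l1 as [|a l1 IH]; intros [|b l2]; simpl; try ring.
  rewrite IH, plus_IZR; ring.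
Qed.

Lemma peval_pscal c l x : peval (pscal c l) x = IZR c * peval l x.
Proof.
  induction l as [|a l IH]; simpl; [ring|]. rewrite IH, mult_IZR; ring.
Qed.

Lemma peval_psub l1 l2 x : peval (psub l1 l2) x = peval l1 x - peval l2 x.
Proof. unfold psub; rewrite peval_padd, peval_pscal; ring. Qed.

Lemma peval_pmul l1 l2 x : peval (pmul l1 l2) x = peval l1 x * peval l2 x.
Proof.
  induction l1 as [|a l1 IH]; cbn [pmul peval]; [ring|].
  rewrite peval_padd, peval_pscal; cbn [peval]; rewrite IH; ring.
Qed.

Lemma peval_ppow l n x : peval (ppow l n) x = peval l x ^ n.
Proof.
  induction n as [|n IH]; cbn [ppow peval pow]; [ring|]. rewrite peval_pmul, IH; ring.
Qed.

Lemma peval_pcomp l q x : peval (pcomp l q) x = peval l (peval q x).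
Proof.
  induction l as [|a l IH]; cbn [pcomp peval]; [ring|].
  rewrite peval_padd, peval_pmul, IH; cbn [peval]; ring.
Qed.

Lemma peval_pshift l x : peval (pshift l) x = peval l (x + 1).
Proof. unfold pshift; rewrite peval_pcomp; simpl; f_equal; ring. Qed.

Lemma peval_1 l : peval l 1 = IZR (fold_right Z.add 0%Z l).
Proof.
  induction l as [|a l IH]; simpl; [reflexivity|]. rewrite IH, plus_IZR; ring.
Qed.

Lemma peval_is_derive l x : is_derive (peval l) x (peval (pder l) x).
Proof.
  apply is_derive_Reals.
  induction l as [|a l IH]; cbn [pder].
  - apply (derivable_pt_lim_const 0).
  - rewrite peval_padd; cbn [peval].
    replace (peval l x + (0 + x * peval (pder l) x)) with
      (0 + (1 * peval l x + x * peval (pder l) x)) by ring.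
    apply (derivable_pt_lim_plus (fun _ => IZR a) (fun y => y * peval l y)).
    + apply derivable_pt_lim_const.
    + apply (derivable_pt_lim_mult (fun y => y) (peval l)); [apply derivable_pt_lim_id| exact IH].
Qed.

Definition nonneg_coefs (l : list Z) : bool := forallb (Z.leb 0) l.

Definition pos_coefs (l : list Z) : bool :=
  match l with nil => false | c :: l' => Z.ltb 0 c && nonneg_coefs l' end.

Lemma peval_nonneg l x : nonneg_coefs l = true -> 0 <= x -> 0 <= peval l x.
Proof.
  induction l as [|a l IH]; simpl; [lra|].
  intros H Hx; apply andb_prop in H as [Ha Hl].
  apply Z.leb_le, IZR_le in Ha.
  assert (0 <= x * peval l x) by (apply Rmult_le_pos; auto). lra.
Qed.

Lemma peval_pos l x : pos_coefs l = true -> 0 <= x -> 0 < peval l x.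
Proof.
  destruct l as [|a l]; simpl; [discriminate|].
  intros H Hx; apply andb_prop in H as [Ha Hl].
  apply Z.ltb_lt, IZR_lt in Ha.
  assert (0 <= x * peval l x) by (apply Rmult_le_pos; auto using peval_nonneg). lra.
Qed.

(* Coefficients of [l (x + 1)] of one sign certify the sign of [l] on [1, +oo). *)
Lemma peval_pos_ge1 l x : pos_coefs (pshift l) = true -> 1 <= x -> 0 < peval l x.
Proof.
  intros H Hx. replace x with (x - 1 + 1) by ring. rewrite <- peval_pshift.
  apply peval_pos; auto; lra.
Qed.

Lemma peval_nonneg_ge1 l x : nonneg_coefs (pshift l) = true -> 1 <= x -> 0 <= peval l x.
Proof.
  intros H Hx. replace x with (x - 1 + 1) by ring. rewrite <- peval_pshift.
  apply peval_nonneg; auto; lra.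
Qed.

(* Positivity on [1, +oo) would be too strong: [T_11 = n + a_11] is negative at [n = 1]. *)
Definition nonzero_at_pos_nat (l : list Z) : bool :=
  negb (Z.eqb (fold_right Z.add 0 l) 0)%Z && pos_coefs (pshift (pshift l)).

Lemma peval_INR_neq0 l n :
  nonzero_at_pos_nat l = true -> (1 <= n)%nat -> peval l (INR n) <> 0.
Proof.
  intros H Hn; apply andb_prop in H as [H1 H2].
  destruct n as [|[|n]]; [lia| |].
  - rewrite peval_1. apply not_0_IZR. intros E. rewrite E in H1. discriminate.
  - apply Rgt_not_eq. rewrite S_INR, <- peval_pshift.
    apply peval_pos_ge1; auto. rewrite S_INR. pose proof (pos_INR n). lra.
Qed.

Definition acoef_frac (j : nat) : Z * Z :=
  nth j [(0, 1); (1, 2); (1, 6); (-1, 6); (3, 5); (-3, 5); (79, 126); (-79, 126);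
         (7230, 6241); (-7230, 6241); (4146631, 3833346); (-4146631, 3833346)]%Z
      (0, 1)%Z.

Lemma acoef_frac_spec j :
  0 < IZR (snd (acoef_frac j)) /\
  acoef j = IZR (fst (acoef_frac j)) / IZR (snd (acoef_frac j)).
Proof.
  do 12 (destruct j as [|j]; [cbn [acoef acoef_frac nth fst snd]; split; lra|]).
  destruct j; cbn [acoef acoef_frac nth fst snd]; split; lra.
Qed.

(* [cf_poly j m = (U, V)] with [T_j = U / V], where [k = j + m]. *)
Fixpoint cf_poly (j m : nat) : list Z * list Z :=
  let a := fst (acoef_frac j) in
  let b := snd (acoef_frac j) in
  match m with
  | O => ([a; b], [b])
  | S m' =>
      let UV := cf_poly (S j) m' in
      (padd (pscal b (0%Z :: fst UV)) (pscal a (0%Z :: snd UV)), pscal b (fst UV))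
  end.

Fixpoint cf_numerators (j m : nat) : list (list Z) :=
  fst (cf_poly j m) :: match m with O => nil | S m' => cf_numerators (S j) m' end.

Section ContinuedFraction.

Variable x : R.

Let nonzero (u : list Z) : Prop := peval u x <> 0.

Lemma cf_den_neq0 j m :
  List.Forall nonzero (cf_numerators j m) -> peval (snd (cf_poly j m)) x <> 0.
Proof.
  destruct (acoef_frac_spec j) as [Hb _].
  destruct m as [|m]; cbn [cf_poly cf_numerators snd]; intros H;
    rewrite ?peval_pscal; cbn [peval].
  - lra.
  - inversion_clear H as [|? ? _ H']. destruct m; inversion_clear H' as [|? ? Hu _];
      apply Rmult_integral_contrapositive; split; auto; lra.
Qed.

Lemma Tfrom_cf_poly j m :
  List.Forall nonzero (cf_numerators j m) ->
  Tfrom x j m = peval (fst (cf_poly j m)) x / peval (snd (cf_poly j m)) x.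
Proof.
  revert j; induction m as [|m IH]; intros j H;
    destruct (acoef_frac_spec j) as [Hb Ha]; cbn [Tfrom cf_poly fst snd].
  - rewrite Ha; cbn [peval]. field; lra.
  - inversion_clear H as [|? ? _ H'].
    assert (HU : peval (fst (cf_poly (S j) m)) x <> 0)
      by (destruct m; inversion_clear H' as [|? ? Hu _]; exact Hu).
    pose proof (cf_den_neq0 _ _ H') as HV.
    rewrite (IH _ H'), Ha, peval_padd, !peval_pscal; cbn [peval].
    field; repeat split; auto; lra.
Qed.

End ContinuedFraction.

Lemma Rk_eq_quot k P Q n :
  forallb nonzero_at_pos_nat (cf_numerators 2 (k - 2)) = true ->
  pmul P (pscal (snd (acoef_frac 1)) (fst (cf_poly 2 (k - 2)))) =
    pmul Q (pscal (fst (acoef_frac 1)) (snd (cf_poly 2 (k - 2)))) ->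
  pos_coefs (pshift Q) = true -> (1 <= n)%nat ->
  Rk k n = peval P (INR n) / peval Q (INR n).
Proof.
  intros Hcf Hid HQ Hn.
  assert (Hnz : List.Forall (fun u => peval u (INR n) <> 0) (cf_numerators 2 (k - 2))).
  { apply List.Forall_forall. intros u Hu. apply peval_INR_neq0; auto.
    exact (proj1 (forallb_forall _ _) Hcf u Hu). }
  assert (HU : peval (fst (cf_poly 2 (k - 2))) (INR n) <> 0)
    by (destruct (k - 2)%nat; inversion Hnz; auto).
  pose proof (cf_den_neq0 _ _ _ Hnz) as HV.
  assert (HQ' : 0 < peval Q (INR n)) by (apply peval_pos_ge1; auto; apply (le_INR 1); auto).
  destruct (acoef_frac_spec 1) as [Hb Ha].
  apply (f_equal (fun l => peval l (INR n))) in Hid.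
  rewrite !peval_pmul, !peval_pscal in Hid.
  unfold Rk. rewrite Tfrom_cf_poly by exact Hnz. rewrite Ha.
  set (U := peval (fst (cf_poly 2 (k - 2))) (INR n)) in *.
  set (V := peval (snd (cf_poly 2 (k - 2))) (INR n)) in *.
  assert (HP : peval P (INR n) = peval Q (INR n) * (IZR (fst (acoef_frac 1)) * V)
                                 / (IZR (snd (acoef_frac 1)) * U)).
  { rewrite <- Hid. field. split; lra || auto. }
  rewrite HP. field. repeat split; lra || auto.
Qed.

Definition frac_eval (fs : list (list Z * list Z)) (x : R) : R :=
  fold_right (fun nd acc => peval (fst nd) x / peval (snd nd) x + acc) 0 fs.

Fixpoint frac_sum (fs : list (list Z * list Z)) : list Z * list Z :=
  match fs with
  | nil => ([0%Z], [1%Z])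
  | nd :: fs' =>
      let ND := frac_sum fs' in
      (padd (pmul (fst nd) (snd ND)) (pmul (snd nd) (fst ND)), pmul (snd nd) (snd ND))
  end.

Lemma frac_sum_spec fs x :
  List.Forall (fun nd => 0 < peval (snd nd) x) fs ->
  0 < peval (snd (frac_sum fs)) x /\
  frac_eval fs x = peval (fst (frac_sum fs)) x / peval (snd (frac_sum fs)) x.
Proof.
  induction fs as [|nd fs IH]; intros H; cbn [frac_sum frac_eval fold_right fst snd].
  - simpl. split; [lra| field].
  - inversion_clear H as [|? ? Hd H'].
    destruct (IH H') as [HD E]. fold (frac_eval fs x). rewrite E, peval_padd, !peval_pmul.
    split; [apply Rmult_lt_0_compat; auto| field; lra].
Qed.

Definition quot_der_num (l m : list Z) : list Z := psub (pmul (pder l) m) (pmul l (pder m)).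

Lemma quot_is_derive l m x : peval m x <> 0 ->
  derivable_pt_lim (fun y => peval l y / peval m y) x
    (peval (quot_der_num l m) x / peval (pmul m m) x).
Proof.
  intros Hm.
  change (fun y => peval l y / peval m y) with (div_fct (peval l) (peval m)).
  replace (peval (quot_der_num l m) x / peval (pmul m m) x) with
    ((peval (pder l) x * peval m x - peval (pder m) x * peval l x) / (peval m x)²).
  - apply derivable_pt_lim_div; auto; apply is_derive_Reals, peval_is_derive.
  - unfold quot_der_num, Rsqr; rewrite peval_psub, !peval_pmul; field; auto.
Qed.

Lemma inv_pow_is_derive a p x : 0 < x + a ->
  derivable_pt_lim (fun y => / (y + a) ^ p) x (- INR p / (x + a) ^ S p).
Proof.
  intros Hx. apply is_derive_Reals. auto_derive.
  - apply pow_nonzero; lra.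
  - destruct p as [|p]; [simpl; field; lra|].
    assert ((x + a) ^ p <> 0) by (apply pow_nonzero; lra).
    cbn [Nat.pred pow]. field; lra.
Qed.

(* The increment from [x] to [x + 1] of [H_x - ln x - P(x)/Q(x) - K/(x + s)^p]. *)
Definition step_fun (P Q : list Z) (K s : R) (p : nat) (x : R) : R :=
  / (x + 1) - ln (x + 1) + ln x - peval (pshift P) x / peval (pshift Q) x
  + peval P x / peval Q x + K * (/ (x + s) ^ p - / (x + s + 1) ^ p).

(* The summands of the derivative of [step_fun] when [K = Kn / Kd]; the first one,
   [1 / (x (x + 1)^2)], is the derivative of [1 / (x + 1) - ln (x + 1) + ln x]. *)
Definition step_deriv_fracs (P Q : list Z) (Kn Kd s : Z) (p : nat) :=
  [([1%Z], [0; 1; 2; 1]%Z);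
   (pscal (-1) (quot_der_num (pshift P) (pshift Q)), pmul (pshift Q) (pshift Q));
   (quot_der_num P Q, pmul Q Q);
   ([(- Kn * Z.of_nat p)%Z], pscal Kd (ppow [s; 1%Z] (S p)));
   ([(Kn * Z.of_nat p)%Z], pscal Kd (ppow [(s + 1)%Z; 1%Z] (S p)))].

Lemma frac_eval_step_deriv_fracs P Q Kn Kd s p x :
  0 < x -> 0 <= IZR s -> 0 < IZR Kd -> peval Q x <> 0 -> peval (pshift Q) x <> 0 ->
  frac_eval (step_deriv_fracs P Q Kn Kd s p) x =
    / (x * (x + 1) ^ 2)
    - peval (quot_der_num (pshift P) (pshift Q)) x / peval (pmul (pshift Q) (pshift Q)) x
    + peval (quot_der_num P Q) x / peval (pmul Q Q) x
    + IZR Kn / IZR Kd * (- INR p / (x + IZR s) ^ S p - - INR p / (x + IZR s + 1) ^ S p).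
Proof.
  intros Hx Hs HKd HQ HQ1.
  unfold frac_eval, step_deriv_fracs; cbn [fold_right fst snd].
  rewrite !peval_pscal, !peval_ppow, !peval_pmul; cbn [peval].
  rewrite !mult_IZR, opp_IZR, plus_IZR, <- INR_IZR_INZ.
  replace (IZR s + 1 + x * (1 + x * 0)) with (x + IZR s + 1) by ring.
  replace (IZR s + x * (1 + x * 0)) with (x + IZR s) by ring.
  assert ((x + IZR s) ^ S p <> 0) by (apply pow_nonzero; lra).
  assert ((x + IZR s + 1) ^ S p <> 0) by (apply pow_nonzero; lra).
  field. repeat split; auto; nra.
Qed.

Lemma step_fun_is_derive P Q Kn Kd s p x :
  0 < x -> (0 <= s)%Z -> (0 < Kd)%Z -> peval Q x <> 0 -> peval Q (x + 1) <> 0 ->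
  derivable_pt_lim (step_fun P Q (IZR Kn / IZR Kd) (IZR s) p) x
    (frac_eval (step_deriv_fracs P Q Kn Kd s p) x).
Proof.
  intros Hx Hs HKd HQ HQ1. apply IZR_le in Hs. apply IZR_lt in HKd.
  rewrite <- peval_pshift in HQ1.
  rewrite frac_eval_step_deriv_fracs by auto.
  assert (Hln : derivable_pt_lim (fun y => / (y + 1) - ln (y + 1) + ln y) x
                  (/ (x * (x + 1) ^ 2))).
  { apply is_derive_Reals. auto_derive; [repeat split; lra| field; lra]. }
  assert (Hpow : derivable_pt_lim (fun y => / (y + IZR s + 1) ^ p) x
                   (- INR p / (x + IZR s + 1) ^ S p)).
  { apply is_derive_Reals.
    apply (is_derive_ext (fun y => / (y + (IZR s + 1)) ^ p)); [intros; f_equal; f_equal; ring|].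
    replace (x + IZR s + 1) with (x + (IZR s + 1)) by ring.
    apply is_derive_Reals, inv_pow_is_derive; lra. }
  unfold step_fun.
  apply (derivable_pt_lim_plus
    (fun y => / (y + 1) - ln (y + 1) + ln y - peval (pshift P) y / peval (pshift Q) y
              + peval P y / peval Q y)
    (fun y => IZR Kn / IZR Kd * (/ (y + IZR s) ^ p - / (y + IZR s + 1) ^ p))).
  - apply (derivable_pt_lim_plus
      (fun y => / (y + 1) - ln (y + 1) + ln y - peval (pshift P) y / peval (pshift Q) y)
      (fun y => peval P y / peval Q y)); [|apply quot_is_derive; auto].
    apply (derivable_pt_lim_minus (fun y => / (y + 1) - ln (y + 1) + ln y)); auto.
    apply quot_is_derive; auto.
  - apply (derivable_pt_lim_scal (fun y => / (y + IZR s) ^ p - / (y + IZR s + 1) ^ p)).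
    apply (derivable_pt_lim_minus (fun y => / (y + IZR s) ^ p)); auto.
    apply inv_pow_is_derive; lra.
Qed.

Lemma ln_succ_sub_bound x : 1 <= x -> 0 < ln (x + 1) - ln x <= / x.
Proof.
  intros Hx. split.
  - assert (ln x < ln (x + 1)) by (apply ln_increasing; lra). lra.
  - rewrite <- ln_div by lra.
    replace ((x + 1) / x) with (1 + / x) by (field; lra).
    pose proof (exp_ineq1_le (ln (1 + / x))) as H.
    assert (0 < / x) by (apply Rinv_0_lt_compat; lra).
    rewrite exp_ln in H by lra. lra.
Qed.

Definition small_quot_check (P Q : list Z) : bool :=
  nonneg_coefs (pshift P) && pos_coefs (pshift Q)
  && nonneg_coefs (pshift (psub Q (pmul [0; 1]%Z P))).

Lemma small_quot_bound P Q x : small_quot_check P Q = true -> 1 <= x ->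
  0 < peval Q x /\ 0 <= peval P x / peval Q x <= / x.
Proof.
  intros H Hx. unfold small_quot_check in H.
  apply andb_prop in H as [H HPQ]; apply andb_prop in H as [HP HQ].
  pose proof (peval_nonneg_ge1 _ _ HP Hx).
  pose proof (peval_pos_ge1 _ _ HQ Hx).
  pose proof (peval_nonneg_ge1 _ _ HPQ Hx) as H1.
  rewrite peval_psub, peval_pmul in H1; cbn [peval] in H1.
  split; [auto|split].
  - apply Rdiv_le_0_compat; lra.
  - apply (Rmult_le_reg_r (peval Q x * x)); [apply Rmult_lt_0_compat; lra|].
    replace (peval P x / peval Q x * (peval Q x * x)) with (peval P x * x) by (field; lra).
    replace (/ x * (peval Q x * x)) with (peval Q x) by (field; lra).
    lra.
Qed.

Lemma inv_pow_bound a p x : 1 <= x -> 0 <= a -> (1 <= p)%nat -> 0 < / (x + a) ^ p <= / x.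
Proof.
  intros Hx Ha Hp. split.
  - apply Rinv_0_lt_compat, pow_lt; lra.
  - apply Rinv_le_contravar; [lra|].
    apply Rle_trans with ((x + a) ^ 1); [simpl; lra|]. apply Rle_pow; auto; lra.
Qed.

(* The constant is crude: all that matters is that [step_fun] vanishes at infinity. *)
Lemma step_fun_abs_le P Q K s p x :
  small_quot_check P Q = true -> Rabs K <= 1 -> 0 <= s -> (1 <= p)%nat -> 1 <= x ->
  Rabs (step_fun P Q K s p x) <= 5 / x.
Proof.
  intros HPQ HK Hs Hp Hx. unfold step_fun. rewrite !peval_pshift.
  pose proof (ln_succ_sub_bound x Hx).
  pose proof (small_quot_bound P Q x HPQ Hx) as [_ R0].
  pose proof (small_quot_bound P Q (x + 1) HPQ ltac:(lra)) as [_ R1].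
  assert (/ (x + 1) <= / x) by (apply Rinv_le_contravar; lra).
  assert (0 < / (x + 1)) by (apply Rinv_0_lt_compat; lra).
  pose proof (inv_pow_bound s p x Hx Hs Hp).
  pose proof (inv_pow_bound (s + 1) p x Hx ltac:(lra) Hp).
  replace (x + (s + 1)) with (x + s + 1) in * by ring.
  assert (HKs : Rabs (K * (/ (x + s) ^ p - / (x + s + 1) ^ p)) <= / x).
  { rewrite Rabs_mult, <- (Rmult_1_l (/ x)).
    apply Rmult_le_compat; [apply Rabs_pos| apply Rabs_pos| auto| apply Rabs_le; lra]. }
  apply Rabs_le_between in HKs. unfold Rdiv. apply Rabs_le; lra.
Qed.

Lemma pos_of_deriv_neg (f df : R -> R) M : 0 <= M ->
  (forall x, 1 <= x -> derivable_pt_lim f x (df x)) -> (forall x, 1 <= x -> df x < 0) ->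
  (forall x, 1 <= x -> - (M / x) <= f x) -> forall x, 1 <= x -> 0 < f x.
Proof.
  intros HM Hd Hneg Hb.
  assert (dec : forall a b, 1 <= a -> a < b -> f b < f a).
  { intros a b Ha Hab. destruct (MVT_cor2 f df a b Hab) as [c [Hc1 Hc2]].
    - intros c Hc; apply Hd; lra.
    - assert (df c < 0) by (apply Hneg; lra).
      assert (df c * (b - a) < 0) by (apply Rmult_neg_pos; lra). lra. }
  intros x Hx.
  assert (0 <= f (x + 1)).
  { destruct (Rle_or_lt 0 (f (x + 1))) as [h|h]; auto. exfalso.
    set (e := - f (x + 1)). assert (He : 0 < e) by (unfold e; lra).
    set (y := x + 2 + M / e).
    assert (0 <= M / e) by (apply Rdiv_le_0_compat; lra).
    assert (f y < f (x + 1)) by (apply dec; unfold y; lra).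
    pose proof (Hb y ltac:(unfold y; lra)).
    assert (M / y < e).
    { apply (Rmult_lt_reg_r y); [unfold y; lra|].
      replace (M / y * y) with M by (field; unfold y; lra).
      unfold y. replace (e * (x + 2 + M / e)) with (e * (x + 2) + M) by (field; lra).
      assert (0 < e * (x + 2)) by (apply Rmult_lt_0_compat; lra). lra. }
    unfold e in *. lra. }
  assert (f (x + 1) < f x) by (apply dec; lra). lra.
Qed.

Lemma step_deriv_dens_pos P Q Kn Kd s p x :
  0 < x -> 0 < peval Q x -> 0 < peval Q (x + 1) -> (0 <= s)%Z -> (0 < Kd)%Z ->
  List.Forall (fun nd => 0 < peval (snd nd) x) (step_deriv_fracs P Q Kn Kd s p).
Proof.
  intros Hx HQ HQ1 Hs HKd. apply IZR_le in Hs. apply IZR_lt in HKd.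
  rewrite <- peval_pshift in HQ1.
  repeat constructor; cbn [snd];
    rewrite ?peval_pmul, ?peval_pscal, ?peval_ppow; cbn [peval]; rewrite ?plus_IZR.
  - nra.
  - nra.
  - nra.
  - apply Rmult_lt_0_compat; [lra| apply pow_lt; lra].
  - apply Rmult_lt_0_compat; [lra| apply pow_lt; lra].
Qed.

Definition step_sign_check (sg : Z) (P Q : list Z) (Kn Kd s : Z) (p : nat) : bool :=
  Z.eqb (Z.abs sg) 1 && small_quot_check P Q
  && pos_coefs (pshift (pscal sg (fst (frac_sum (step_deriv_fracs P Q Kn Kd s p)))))
  && Z.leb 0 s && Z.ltb 0 Kd && Z.leb (Z.abs Kn) Kd && Nat.leb 1 p.

(* [step_fun] vanishes at infinity and its derivative has sign [sg], so it has sign [-sg]. *)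
Lemma step_fun_sign sg P Q Kn Kd s p :
  step_sign_check sg P Q Kn Kd s p = true ->
  forall x, 1 <= x -> IZR sg * step_fun P Q (IZR Kn / IZR Kd) (IZR s) p x < 0.
Proof.
  unfold step_sign_check. rewrite !andb_true_iff, Z.eqb_eq, Z.leb_le, Z.ltb_lt, Z.leb_le, Nat.leb_le.
  intros [[[[[[Hsg HPQ] HN] Hs] HKd] HK] Hp].
  assert (HQ : forall y, 1 <= y -> 0 < peval Q y) by (intros y Hy; apply (small_quot_bound P Q y); auto).
  set (F := step_fun P Q (IZR Kn / IZR Kd) (IZR s) p).
  set (fs := step_deriv_fracs P Q Kn Kd s p) in *.
  assert (Hsg' : Rabs (IZR sg) = 1) by (rewrite Rabs_Zabs, Hsg; reflexivity).
  intros x0 Hx0.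
  enough (0 < - (IZR sg * F x0)) by lra.
  assert (HK' : Rabs (IZR Kn / IZR Kd) <= 1).
  { apply IZR_lt in HKd. apply IZR_le in HK. rewrite <- Rabs_Zabs in HK.
    rewrite Rabs_div, (Rabs_right (IZR Kd)) by lra.
    apply Rmult_le_reg_r with (IZR Kd); [lra|]. field_simplify; lra. }
  apply (pos_of_deriv_neg (fun x => - (IZR sg * F x)) (fun x => - (IZR sg * frac_eval fs x)) 5);
    [lra| | | |auto].
  - intros x Hx. apply derivable_pt_lim_opp, derivable_pt_lim_scal, step_fun_is_derive; auto;
      try lra; apply Rgt_not_eq, HQ; lra.
  - intros x Hx.
    destruct (frac_sum_spec fs x) as [HD ->]; [apply step_deriv_dens_pos; auto; try lra; apply HQ; lra|].
    pose proof (peval_pos_ge1 _ _ HN Hx) as HN'. rewrite peval_pscal in HN'.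
    enough (0 < IZR sg * (peval (fst (frac_sum fs)) x / peval (snd (frac_sum fs)) x)) by lra.
    rewrite Rmult_div_assoc. apply Rdiv_lt_0_compat; lra.
  - intros x Hx.
    assert (HF : Rabs (IZR sg * F x) <= 5 / x).
    { rewrite Rabs_mult, Hsg', Rmult_1_l. apply step_fun_abs_le; auto.
      apply IZR_le; lia. }
    apply Rabs_le_between in HF. lra.
Qed.

Lemma is_lim_seq_0_of_bound (u : nat -> R) M :
  (forall n, (1 <= n)%nat -> Rabs (u n) <= M / INR n) -> is_lim_seq u 0.
Proof.
  intros H.
  assert (Hinv : is_lim_seq (fun n => / INR n) 0).
  { replace (Finite 0) with (Rbar_inv p_infty) by reflexivity.
    apply is_lim_seq_inv; [apply is_lim_seq_INR| discriminate]. }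
  apply is_lim_seq_scal_l with (a := M) in Hinv. rewrite Rbar_mult_0_r in Hinv.
  apply is_lim_seq_incr_1 in Hinv.
  apply is_lim_seq_incr_1, is_lim_seq_abs_0.
  apply is_lim_seq_le_le with (fun _ => 0) (fun n => M * / INR (S n));
    [| apply is_lim_seq_const| exact Hinv].
  intros n. split; [apply Rabs_pos| apply H; lia].
Qed.

Lemma euler_gamma_squeeze (r a b : nat -> R) :
  (forall n, (1 <= n)%nat -> r n - a n < r (S n) - a (S n)) ->
  (forall n, (1 <= n)%nat -> r (S n) - b (S n) < r n - b n) ->
  is_lim_seq a 0 -> is_lim_seq b 0 ->
  is_lim_seq (fun n => harmonic n - ln (INR n) - r n) 0 ->
  forall n, (1 <= n)%nat -> r n - a n < euler_gamma < r n - b n.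
Proof.
  intros Hu Hv Ha Hb Hh.
  set (u := fun m => r (S m) - a (S m)). set (v := fun m => r (S m) - b (S m)).
  assert (Hu' : forall m, u m <= u (S m)) by (intros m; left; apply Hu; lia).
  assert (Hv' : forall m, v (S m) <= v m) by (intros m; left; apply Hv; lia).
  apply is_lim_seq_incr_1 in Ha, Hb, Hh.
  destruct (ex_lim_seq_adj u v Hu' Hv') as [[L HL] _].
  { pose proof (is_lim_seq_minus' _ _ _ _ Ha Hb) as H. rewrite Rminus_0_r in H.
    revert H; apply is_lim_seq_ext; intros m; unfold u, v; ring. }
  assert (HvL : is_lim_seq v L).
  { pose proof (is_lim_seq_minus' _ _ _ _ (is_lim_seq_plus' _ _ _ _ HL Ha) Hb) as H.
    rewrite Rplus_0_r, Rminus_0_r in H. revert H; apply is_lim_seq_ext; intros m; unfold u, v; ring. }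
  assert (Hg : euler_gamma = L).
  { assert (HH : is_lim_seq (fun n => harmonic n - ln (INR n)) L).
    { apply is_lim_seq_incr_1.
      pose proof (is_lim_seq_plus' _ _ _ _ (is_lim_seq_plus' _ _ _ _ HL Ha) Hh) as H.
      rewrite !Rplus_0_r in H. revert H; apply is_lim_seq_ext; intros m; unfold u; ring. }
    unfold euler_gamma. rewrite (is_lim_seq_unique _ _ HH). reflexivity. }
  intros [|m] Hm; [lia|]. rewrite Hg.
  pose proof (Hu (S m) ltac:(lia)). pose proof (is_lim_seq_incr_compare u L HL Hu' (S m)).
  pose proof (Hv (S m) ltac:(lia)). pose proof (is_lim_seq_decr_compare v L HvL Hv' (S m)).
  unfold u, v in *. split; lra.
Qed.

Lemma harmonic_S n : harmonic (S n) = harmonic n + / INR (S n).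
Proof. unfold harmonic. rewrite sum_n_Sm; [reflexivity| lia]. Qed.

Section RationalTail.

Variables (k : nat) (P Q : list Z).

Hypothesis Rk_quot : forall n, (1 <= n)%nat -> Rk k n = peval P (INR n) / peval Q (INR n).
Hypothesis PQ_small : small_quot_check P Q = true.

Lemma rk_sub_step K s p n : (1 <= n)%nat ->
  (rk k (S n) - K * / (INR (S n) + s) ^ p) - (rk k n - K * / (INR n + s) ^ p) =
  step_fun P Q K s p (INR n).
Proof.
  intros Hn. unfold rk, step_fun.
  rewrite harmonic_S, (Rk_quot n Hn), (Rk_quot (S n) ltac:(lia)), !peval_pshift, S_INR.
  replace (INR n + 1 + s) with (INR n + s + 1) by ring. ring.
Qed.

Lemma euler_gamma_bounds K lo hi p :
  (forall x, 1 <= x -> 0 < step_fun P Q K lo p x) ->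
  (forall x, 1 <= x -> step_fun P Q K hi p x < 0) ->
  0 <= lo -> 0 <= hi -> (1 <= p)%nat ->
  forall n, (1 <= n)%nat ->
  rk k n - K * / (INR n + lo) ^ p < euler_gamma < rk k n - K * / (INR n + hi) ^ p.
Proof.
  intros Hlo Hhi Hlo0 Hhi0 Hp.
  assert (Hx : forall n, (1 <= n)%nat -> 1 <= INR n) by (intros n Hn; apply (le_INR 1); auto).
  assert (Hcorr : forall s, 0 <= s -> is_lim_seq (fun n => K * / (INR n + s) ^ p) 0).
  { intros s Hs. apply (is_lim_seq_0_of_bound _ (Rabs K)). intros n Hn.
    pose proof (inv_pow_bound s p (INR n) (Hx n Hn) Hs Hp).
    rewrite Rabs_mult, (Rabs_right (/ _)) by lra. unfold Rdiv.
    apply Rmult_le_compat_l; [apply Rabs_pos| lra]. }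
  apply euler_gamma_squeeze; auto.
  - intros n Hn. pose proof (rk_sub_step K lo p n Hn). pose proof (Hlo (INR n) (Hx n Hn)). lra.
  - intros n Hn. pose proof (rk_sub_step K hi p n Hn). pose proof (Hhi (INR n) (Hx n Hn)). lra.
  - apply (is_lim_seq_0_of_bound _ 1). intros n Hn. unfold rk.
    replace (harmonic n - ln (INR n) - (harmonic n - ln (INR n) - Rk k n)) with (Rk k n) by ring.
    rewrite Rk_quot by auto.
    destruct (small_quot_bound P Q (INR n) PQ_small (Hx n Hn)) as [_ HR].
    rewrite Rabs_right by lra. lra.
Qed.

End RationalTail.

(* R_10 and R_11 in lowest terms; [cf_poly] leaves a common power of x. *)
Definition P10 : list Z := [757663907; 1462202322; 3663389030; 1473250800; 1610005320]%Z.
Definition Q10 : list Z :=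
  [252996980; 2155378680; 4188622200; 7907306400; 3483170040; 3220010640]%Z.
Definition P11 : list Z := [-262445; 2235870; -1311429; 8202600; -556710; 3340260]%Z.
Definition Q11 : list Z := [0; 0; 4471740; 0; 16405200; 0; 6680520]%Z.

Lemma Rk10_quot n : (1 <= n)%nat -> Rk 10 n = peval P10 (INR n) / peval Q10 (INR n).
Proof. intros Hn. apply Rk_eq_quot; [vm_compute; reflexivity ..| exact Hn]. Qed.

Lemma Rk11_quot n : (1 <= n)%nat -> Rk 11 n = peval P11 (INR n) / peval Q11 (INR n).
Proof. intros Hn. apply Rk_eq_quot; [vm_compute; reflexivity ..| exact Hn]. Qed.

Lemma C10_frac : C10 = IZR (-2755095121) / IZR 892586949408.
Proof. unfold C10. field. Qed.

Lemma C11_frac : C11 = IZR 20169451 / IZR 3821257440.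
Proof. reflexivity. Qed.

Lemma step10_lo x : 1 <= x -> 0 < step_fun P10 Q10 C10 1 11 x.
Proof.
  intros Hx. rewrite C10_frac.
  pose proof (step_fun_sign (-1) P10 Q10 (-2755095121) 892586949408 1 11
                ltac:(vm_compute; reflexivity) x Hx).
  lra.
Qed.

Lemma step10_hi x : 1 <= x -> step_fun P10 Q10 C10 0 11 x < 0.
Proof.
  intros Hx. rewrite C10_frac.
  pose proof (step_fun_sign 1 P10 Q10 (-2755095121) 892586949408 0 11
                ltac:(vm_compute; reflexivity) x Hx).
  lra.
Qed.

Lemma step11_lo x : 1 <= x -> 0 < step_fun P11 Q11 C11 0 12 x.
Proof.
  intros Hx. rewrite C11_frac.
  pose proof (step_fun_sign (-1) P11 Q11 20169451 3821257440 0 12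
                ltac:(vm_compute; reflexivity) x Hx).
  lra.
Qed.

Lemma step11_hi x : 1 <= x -> step_fun P11 Q11 C11 1 12 x < 0.
Proof.
  intros Hx. rewrite C11_frac.
  pose proof (step_fun_sign 1 P11 Q11 20169451 3821257440 1 12
                ltac:(vm_compute; reflexivity) x Hx).
  lra.
Qed.

Theorem theorem2 : forall n : nat, (1 <= n)%nat ->
  (- C10 * / (INR n + 1) ^ 11 < euler_gamma - rk 10 n < - C10 * / INR n ^ 11) /\
  (C11 * / (INR n + 1) ^ 12 < rk 11 n - euler_gamma < C11 * / INR n ^ 12).
Proof.
  intros n Hn.
  assert (H10 := euler_gamma_bounds 10 P10 Q10 Rk10_quot ltac:(vm_compute; reflexivity)
                   C10 1 0 11 step10_lo step10_hi ltac:(lra) ltac:(lra) ltac:(lia) n Hn).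
  assert (H11 := euler_gamma_bounds 11 P11 Q11 Rk11_quot ltac:(vm_compute; reflexivity)
                   C11 0 1 12 step11_lo step11_hi ltac:(lra) ltac:(lra) ltac:(lia) n Hn).
  rewrite Rplus_0_r in H10, H11. lra.
Qed.
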